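(* Let $m,n$ be natural numbers. If the $n$-th term $G(n,m)$ of the Goodstein sequence $G(m)$ is $0$, then $n=2n_1$ for some natural number $n_1$, and $G(k,m)=n-k$ for all $k$ with $n_1\le k<n$.
   Context: For a natural number base $b>1$, the hereditary representation $m\langle b\rangle$ of $m$ is $\sum_{i=0}^{l} a_i b^{i}$ with $0\le a_i<b$, $a_l\ne0$, each exponent itself written in hereditary representation in base $b$, recursively. $m\langle b\rangle''$ is obtained by syntactically replacing every $b$ by $b+1$ in $m\langle b\rangle$. The Goodstein sequence $G(m)=\{m, m''-1, (m''-1)''-1,\dots\}$ starts from $m$ in base $2$; its $n$-th term is $G(n,m)$, with $G(1,m)=m$ in base $2$, $G(k,m)$ written in base $k+1$, and $G(k+1,m)=G(k,m)\langle k+1\rangle''-1$. *)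

From mathcomp Require Import all_boot.
Set Implicit Arguments. Unset Strict Implicit. Unset Printing Implicit Defensive.

(* [bump_fuel f b m]: computes m<b>'' : write m in hereditary base-b
   representation and syntactically replace every b by b+1.
   If m > 0 and e = trunc_log b m (largest e with b^e <= m), then
   m = a * b^e + r with a = m %/ b^e (0 < a < b) and r = m %% b^e < b^e;
   the leading term a*b^e becomes a*(b+1)^(e<b>''), and r is processed
   recursively (its terms have smaller exponents).  For b >= 2, fuel m.+1
   is always sufficient, since e < m and r < m. *)
Fixpoint bump_fuel (fuel b m : nat) : nat :=
  match fuel with
  | 0 => 0
  | f.+1 =>
      if m == 0 then 0
      else
        let e := trunc_log b m in
        (m %/ b ^ e) * b.+1 ^ (bump_fuel f b e) + bump_fuel f b (m %% b ^ e)
  end.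

Definition bump (b m : nat) : nat := bump_fuel m.+1 b m.

(* goodstein_aux k m = G(k+1, m) (written in base k+2). *)
Fixpoint goodstein_aux (k m : nat) : nat :=
  match k with
  | 0 => m
  | k'.+1 => bump k'.+2 (goodstein_aux k' m) - 1
  end.

(* G(n, m): n-th term of the Goodstein sequence, with G(1,m) = m and
   G(k+1,m) = G(k,m)<k+1>'' - 1.  (Index n = 0 is not used by the paper;
   we set G(0,m) = m.) *)
Definition G (n m : nat) : nat := goodstein_aux n.-1 m.

Example G3 : [seq G k 3 | k <- iota 1 6] = [:: 3; 3; 3; 2; 1; 0]. Proof. by []. Qed.
Example G4 : G 2 4 = 26. Proof. by []. Qed.

From Pilot Require Import Defs.
From mathcomp Require Import all_boot.
From mathcomp Require Import zify.

(* Once a term satisfies G(k,m) <= k it is a single digit in base k+1, so the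
   base change leaves it alone and the sequence counts down by one per step.
   Before that moment every term is at least its base, and the base change
   raises it above the next base, so the first such k has G(k,m) = k exactly.
   Counting down from k then reaches 0 at step 2k. *)

Lemma bump_fuel0 f b : bump_fuel f b 0 = 0.
Proof. by case: f. Qed.

Lemma bump_fuelS f b x : bump_fuel f.+1 b x =
  if x == 0 then 0 else
  (x %/ b ^ trunc_log b x) * b.+1 ^ bump_fuel f b (trunc_log b x)
    + bump_fuel f b (x %% b ^ trunc_log b x).
Proof. by []. Qed.

Lemma bump_fuel_gt0 f b x : 1 < b -> 0 < f -> 0 < x -> 0 < bump_fuel f b x.
Proof.
move=> b_gt1; case: f => // f _ x_gt0; rewrite bump_fuelS gtn_eqF //.
have pow_gt0 : 0 < b ^ trunc_log b x by rewrite expn_gt0 ltnW.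
by rewrite ltn_addr // muln_gt0 expn_gt0 andbT divn_gt0 // trunc_logP.
Qed.

(* Qualified, since plain [bump] is fintype's index-shifting function. *)
Lemma bump_digit b x : x < b -> Defs.bump b x = x.
Proof.
move=> x_lt_b; rewrite /Defs.bump bump_fuelS; have [->|_] := eqVneq x 0; first by [].
have -> : trunc_log b x = 0 by apply/eqP; rewrite trunc_log_eq0; apply/orP; right; lia.
by rewrite expn0 divn1 modn1 bump_fuel0 muln1 addn0.
Qed.

Lemma bump_gt_base b x : 1 < b -> b <= x -> b < Defs.bump b x.
Proof.
move=> b_gt1 b_le_x; have x_gt0 : 0 < x by lia.
rewrite /Defs.bump bump_fuelS gtn_eqF //.
have pow_gt0 : 0 < b ^ trunc_log b x by rewrite expn_gt0 ltnW.
have e_gt0 : 0 < trunc_log b x by rewrite trunc_log_gt0 b_gt1; lia.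
have lead_gt0 : 0 < x %/ b ^ trunc_log b x by rewrite divn_gt0 // trunc_logP.
have exp_gt0 : 0 < bump_fuel x b (trunc_log b x) by apply: bump_fuel_gt0.
apply: leq_trans (leq_addr _ _); apply: leq_trans (leq_pmull _ lead_gt0).
by rewrite -[X in X <= _]expn1 leq_pexp2l.
Qed.

Lemma G_succ k m : 0 < k -> G k.+1 m = Defs.bump k.+1 (G k m) - 1.
Proof. by case: k. Qed.

Lemma G_gt_index k m : 0 < k -> k < G k m -> k < G k.+1 m.
Proof.
move=> k_gt0 k_lt; rewrite G_succ //.
by have := @bump_gt_base k.+1 (G k m) k_gt0 k_lt; lia.
Qed.

Lemma G_countdown k m j : 0 < k -> G k m <= k -> G (k + j) m = G k m - j.
Proof.
move=> k_gt0 Gk_le; elim: j => [|j IHj]; first by rewrite addn0 subn0.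
by rewrite addnS G_succ ?addn_gt0 ?k_gt0 // IHj bump_digit; lia.
Qed.

Lemma G_first_digit k m : 0 < m -> 0 < k -> G k m <= k ->
  (forall i, 0 < i < k -> i < G i m) -> G k m = k.
Proof.
move=> m_gt0; case: k => // -[_|i _] Gk_le before; first by move: Gk_le; rewrite /G /=; lia.
by have := @G_gt_index i.+1 m isT (before i.+1 (ltnSn _)); lia.
Qed.

Theorem corollary6p1 (m n : nat) :
  0 < m -> 0 < n -> G n m = 0 ->
  (forall k, 0 < k < n -> G k m != 0) ->
  exists n1 : nat, n = 2 * n1 /\ (forall k, n1 <= k < n -> G k m = n - k).
Proof.
move=> m_gt0 n_gt0 Gn_eq0 Gk_neq0.
have digit_ex : exists k, (0 < k) && (G k m <= k) by exists n; rewrite n_gt0 Gn_eq0.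
case: (ex_minnP digit_ex) => n1 /andP [n1_gt0 Gn1_le] n1_min.
have n1_le_n : n1 <= n by apply: n1_min; rewrite n_gt0 Gn_eq0.
have Gn1 : G n1 m = n1.
  apply: G_first_digit => // i /andP [i_gt0 i_lt]; rewrite ltnNge.
  by apply/negP => Gi_le; have := n1_min i; rewrite i_gt0 Gi_le => /(_ isT); lia.
have countdown j : G (n1 + j) m = n1 - j by rewrite G_countdown ?Gn1.
have n_eq : n = 2 * n1.
  have := countdown (n - n1); rewrite subnKC // Gn_eq0 => n_ge.
  have := Gk_neq0 (n1 + n1); rewrite countdown subnn; lia.
exists n1; split=> // k /andP [n1_le_k k_lt_n].
by rewrite -(subnKC n1_le_k) countdown; lia.
Qed.
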